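(* Let $K$ be a virtual knotoid diagram, let $s$ be a state of $K$, and let $G^s_K$ be the associated marked ribbon graph decorated with signs and arrows. Let $e_+$ and $e_-$ be the numbers of positive and negative edges of $G^s_K$, and define edge weights $b_e=B/A$ if $e$ is positive and $b_e=A/B$ if $e$ is negative. Then \[\langle K\rangle=\frac{A^{e_+}B^{e_-}}{d}\,R_{G^s_K}(1,\mathbf b,d),\] and consequently \[\langle K\rangle_A=\frac{A^{e_+-e_-}}{-A^2-A^{-2}}\,R_{G^s_K}\big(1,\mathbf b|_{B=A^{-1}},-A^2-A^{-2}\big).\]
   Context: Write $I=[0,1]$. A virtual knotoid diagram is an immersion of $I$ into $S^2$ whose singularities are finitely many transversal double points, each decorated either as a classical crossing (with over/under information) or as a virtual crossing; tail = image of $0$, head = image of $1$, oriented tail to head. Oriented state expansion: at each classical crossing there are two smoothings, the Kauffman $A$-smoothing and $B$-smoothing. Exactly one is compatible with the orientation (oriented smoothing); the other (disoriented) reverses the orientation along its arcs, and at each of the two points of reversal an arrow (a mark pointing in one direction along the curve) is placed, oriented counterclockwise around the former crossing. A state $s$ is a choice of smoothing at every classical crossing; it consists of loop components and one arc component (possibly with virtual crossings), decorated with arrows. Reduction: virtual moves (arrows pass virtual crossings) and cancellation of two consecutive arrows pointing in the same direction along a component. Each loop reduces to $K_i$ (a loop with $2i$ alternating arrows, $i\ge0$), and the arc reduces to $\Lambda_i$ or $\Lambda_i'$ (an arc with $2i$ alternating arrows whose first arrow from the tail points along, respectively against, the orientation at the tail). The arrow bracket is \[\langle K\rangle=\sum_s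 A^{a(s)}B^{b(s)}\prod_{\text{loops }C}d\,K_{i(C)}\cdot\Lambda^{(\prime)}_{j(s)}\in\mathbb Z[A,B,d,\{K_i,\Lambda_i,\Lambda_i'\}],\] where $a(s),b(s)$ are the numbers of $A$- and $B$-smoothings, $K_0=\Lambda_0=\Lambda_0'=1$, and $K_i,\Lambda_i,\Lambda_i'$ are commuting variables. The arrow polynomial $\langle K\rangle_A$ is its specialization at $B=A^{-1}$, $d=-A^2-A^{-2}$. A ribbon graph is a surface that is a union of vertex discs and edge discs, each edge disc meeting vertex discs in exactly two disjoint segments (attaching arcs); a marked vertex carries a marking (a boundary point away from attaching arcs) and an orientation of its boundary. The marked ribbon graph $G^s_K$: vertices are discs bounded by the state components of $s$, the arc component giving the marked vertex whose boundary is the arc closed up through the marking joining its endpoints, oriented tail to head. Edges correspond to classical crossings: at each smoothing site a small planar ribbon joins the two opposite arcs of the smoothing. Sign $+$ if $s$ uses the $A$-smoothing there, $-$ otherwise. Each edge gets two arrows running counterclockwise: if the smoothing is oriented, one on each edge boundary arc not meeting a vertex; if disoriented, one on each attaching arc. For a spanning subgraph $F\subseteq E(G)$ of a marked ribbon graph $G$ with one marked vertex, $k(F)$ is its number of components and $\mathrm{bc}(F)$ its number of boundary components; one boundary component passes through the marking, the others form $\partial^c(F)$. After cancelling consecutive equally-directed arrows, a circular component has $2j$ alternating arrows and contributes $K_j$; the marked component, read from the marking along the orientation, contributes $\Lambda_j$ or $\Lambda_j'$ according as its first arrow points along or against the orientation. The arrow Bollobás–Riordan polynomial is \[R_G(a,\mathbf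 b,c)=\sum_{F\subseteq E(G)}a^{k(F)}\Big(\prod_{e\in F}b_e\Big)c^{\mathrm{bc}(F)}\Big(\prod_{f\in\partial^c(F)}K_{j(f)}\Big)\Lambda^{(\prime)}_{j(F)}.\] *)

From HB Require Import structures.
From mathcomp Require Import all_boot all_order all_algebra.
Set Implicit Arguments. Unset Strict Implicit. Unset Printing Implicit Defensive.
Import Order.TTheory GRing.Theory Num.Theory.
Local Open Scope ring_scope.

(* Arrow words.  A word lists, in the order met along a traversal, the       *)
(* arrows on a curve: true = arrow points along the traversal direction.     *)
Definition red (w : seq bool) : seq bool :=
  foldr (fun b st => match st with
                     | b' :: st' => if b == b' then st' else b :: st
                     | [::] => [:: b] end) [::] w.

(* cyclic reduction: additionally cancel the first and last arrow when they *)
(* point in the same direction (they are consecutive on a loop).            *)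
Fixpoint cstrip (k : nat) (v : seq bool) : seq bool :=
  if k is k'.+1 then
    (if v is x :: v' then
       (if v' is _ :: _ then
          (if x == last x v' then cstrip k' (behead (belast x v')) else v)
        else v)
     else v)
  else v.
Definition cred (w : seq bool) : seq bool := let v := red w in cstrip (size v) v.

(* index i of K_i for a loop with arrow word w *)
Definition jcyc (w : seq bool) : nat := ((size (cred w)) %/ 2)%N.

(* value Lambda_j / Lambda'_j of an arc read from its start *)
Definition lamv (R : Type) (Lv Lv' : nat -> R) (w : seq bool) : R :=
  let v := red w in
  match v with
  | [::] => Lv 0%N
  | b :: _ => if b then Lv ((size v) %/ 2)%N else Lv' ((size v) %/ 2)%N
  end.

(* Virtual knotoid diagrams, encoded by their (signed, over/under) Gauss    *)
(* code.  With n classical crossings the curve passes 2n times through      *)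
(* crossings; passages are numbered 0..2n-1 from tail to head.             *)
(* vk_pass c true / false = passage of the over / under strand at c;       *)
(* vk_pos c = true iff c is a positive crossing.                            *)
Record vkd := VKD {
  vk_n : nat;
  vk_pass : 'I_vk_n -> bool -> 'I_(2 * vk_n);
  vk_pos : 'I_vk_n -> bool }.
Arguments vk_pass : clear implicits.
Arguments vk_pos : clear implicits.

Definition valid_vkd (K : vkd) : Prop :=
  injective (fun cb : 'I_(vk_n K) * bool => vk_pass K cb.1 cb.2).

(* end points at crossings: (p, true) = outgoing end at passage p,         *)
(*                          (p, false) = incoming end at passage p.        *)
Definition CE (K : vkd) := ('I_(2 * vk_n K) * bool)%type.

(* the four ends around crossing c, listed counterclockwise starting from  *)
(* the outgoing over-strand end (index taken mod 4).                       *)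
Definition pt (K : vkd) (c : 'I_(vk_n K)) (k : nat) : CE K :=
  let o := vk_pass K c true in
  let u := vk_pass K c false in
  match (k %% 4)%N with
  | 0 => (o, true)
  | 1 => (u, vk_pos K c)
  | 2 => (o, false)
  | _ => (u, ~~ vk_pos K c)
  end.

Arguments pt : clear implicits.

Definition locate (K : vkd) (q : CE K) : option ('I_(vk_n K) * 'I_4) :=
  [pick ck : 'I_(vk_n K) * 'I_4 | pt K ck.1 ck.2 == q].

(* Kauffman smoothings (sA = true: A-smoothing): the A-smoothing joins    *)
(* ends 1-2 and 3-0, the B-smoothing joins ends 0-1 and 2-3.             *)
Definition partner (sA : bool) (k : nat) : nat :=
  if odd k == sA then k.+1 else (k + 3)%N.

(* the smoothing at c with choice sA is disoriented *)
Definition disor (K : vkd) (sA : bool) (c : 'I_(vk_n K)) : bool :=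
  sA != vk_pos K c.

Arguments disor : clear implicits.

Definition kstate (K : vkd) := {ffun 'I_(vk_n K) -> bool}.

Definition smooth (K : vkd) (s : kstate K) (q : CE K) : CE K :=
  if locate q is Some ck then pt K ck.1 (partner (s ck.1) ck.2) else q.

(* arrow met when following the smoothing arc starting at q; the arrow    *)
(* points counterclockwise around the crossing (from end k to end k+1).    *)
Definition sarrow (K : vkd) (s : kstate K) (q : CE K) : seq bool :=
  if locate q is Some ck then
    (if disor K (s ck.1) ck.1 then [:: odd ck.2 == s ck.1] else [::])
  else [::].

(* arc of the curve leaving end q (closing the arc from the head back to  *)
(* the tail, through the marking).                                         *)
Definition segn (K : vkd) (q : CE K) : CE K :=
  if q.2 then (ordS q.1, false) else (ord_pred q.1, true).

Definition stepK (K : vkd) (s : kstate K) (q : CE K) : CE K := segn (smooth s q).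

Definition wordK (K : vkd) (s : kstate K) (x : CE K) : seq bool :=
  flatten [seq sarrow s y | y <- orbit (stepK s) x].

Definition stconn (K : vkd) (s : kstate K) : rel (CE K) :=
  fun x y => (y == smooth s x) || (y == segn x).

(* the end reached from the tail along the first arc *)
Definition tailpt (K : vkd) : option (CE K) :=
  [pick q : CE K | (nat_of_ord q.1 == 0%N) && ~~ q.2].

Definition loopsK (R : comNzRingType) (K : vkd) (s : kstate K) (d : R)
  (Kv : nat -> R) : R :=
  \prod_(x : CE K | (x \in roots (stconn s)) &&
           (if tailpt K is Some t then ~~ connect (stconn s) t x else true))
     (d * Kv (jcyc (wordK s x))).

Definition arcK (R : Type) (K : vkd) (s : kstate K) (Lv Lv' : nat -> R) : R :=
  lamv Lv Lv' (if tailpt K is Some t then wordK s t else [::]).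

Definition arrow_bracket (R : comNzRingType) (K : vkd) (A B d : R)
  (Kv Lv Lv' : nat -> R) : R :=
  \sum_(s : kstate K)
     A ^+ #|[set c | s c]| * B ^+ #|[set c | ~~ s c]| * loopsK s d Kv * arcK s Lv Lv'.

Definition arrow_poly (R : fieldType) (K : vkd) (A : R) (Kv Lv Lv' : nat -> R) : R :=
  arrow_bracket K A A^-1 (- A ^+ 2 - A ^- 2) Kv Lv Lv'.

(* Marked ribbon graphs with arrows, combinatorially.  Edges 'I_ne.  Each  *)
(* edge e has attaching arcs i (i : bool) with endpoints ("flags")         *)
(* (e,i,j), j : bool; its two remaining boundary arcs (sides) k : bool     *)
(* join (e,false,k) to (e,true,k).  rg_nu matches each flag with the flag  *)
(* at the other end of the vertex-boundary arc leaving it.  rg_niso counts *)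
(* unmarked vertices without attached edges.  rg_mark = Some m: the       *)
(* marking lies on the vertex arc from rg_nu m to m, and the orientation   *)
(* reaches m first; None: the marked vertex has no attached edge.          *)
(* rg_att e i = Some b: arrow on attaching arc i pointing towards (e,i,b); *)
(* rg_side e k = Some b: arrow on side k pointing towards (e,b,k).         *)
(* Vertex arcs carry no arrows.  rg_sign e = true iff e is positive.       *)
Record mrgraph := MRG {
  rg_ne : nat;
  rg_niso : nat;
  rg_nu : 'I_rg_ne * bool * bool -> 'I_rg_ne * bool * bool;
  rg_mark : option ('I_rg_ne * bool * bool);
  rg_sign : 'I_rg_ne -> bool;
  rg_att : 'I_rg_ne -> bool -> option bool;
  rg_side : 'I_rg_ne -> bool -> option bool }.
Arguments rg_nu : clear implicits.
Arguments rg_mark : clear implicits.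
Arguments rg_sign : clear implicits.
Arguments rg_att : clear implicits.
Arguments rg_side : clear implicits.

Definition flag (G : mrgraph) := ('I_(rg_ne G) * bool * bool)%type.

Definition tau0 (G : mrgraph) (x : flag G) : flag G :=
  let: (e, i, j) := x in (e, i, ~~ j).

(* move along the boundary of the subsurface of F at a flag *)
Definition tauF (G : mrgraph) (F : {set 'I_(rg_ne G)}) (x : flag G) : flag G :=
  let: (e, i, j) := x in if e \in F then (e, ~~ i, j) else (e, i, ~~ j).

Definition arrF (G : mrgraph) (F : {set 'I_(rg_ne G)}) (x : flag G) : seq bool :=
  let: (e, i, j) := x in
  if e \in F then (if rg_side G e j is Some b then [:: b == ~~ i] else [::])
  else (if rg_att G e i is Some b then [:: b == ~~ j] else [::]).

Definition bstep (G : mrgraph) (F : {set 'I_(rg_ne G)}) (x : flag G) : flag G :=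
  rg_nu G (tauF F x).

Definition bword (G : mrgraph) (F : {set 'I_(rg_ne G)}) (x : flag G) : seq bool :=
  flatten [seq arrF F y | y <- orbit (bstep F) x].

Definition bconn (G : mrgraph) (F : {set 'I_(rg_ne G)}) : rel (flag G) :=
  fun x y => (y == rg_nu G x) || (y == tauF F x).

Definition vconn (G : mrgraph) (F : {set 'I_(rg_ne G)}) : rel (flag G) :=
  fun x y => [|| y == rg_nu G x, y == tau0 x | y == tauF F x].

Definition extra (G : mrgraph) : nat :=
  (rg_niso G + (if rg_mark G is Some _ then 0 else 1))%N.

Definition kF (G : mrgraph) (F : {set 'I_(rg_ne G)}) : nat :=
  (#|[pred x | x \in roots (vconn F)]| + extra G)%N.
Definition bcF (G : mrgraph) (F : {set 'I_(rg_ne G)}) : nat :=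
  (#|[pred x | x \in roots (bconn F)]| + extra G)%N.

Definition arrowBR (R : comNzRingType) (G : mrgraph) (a c : R) (b : 'I_(rg_ne G) -> R)
  (Kv Lv Lv' : nat -> R) : R :=
  \sum_(F : {set 'I_(rg_ne G)})
     a ^+ kF F * (\prod_(e in F) b e) * c ^+ bcF F *
     ((\prod_(x : flag G | (x \in roots (bconn F)) &&
          (if rg_mark G is Some m then ~~ connect (bconn F) m x else true))
         Kv (jcyc (bword F x))) * Kv 0%N ^+ rg_niso G) *
     lamv Lv Lv' (if rg_mark G is Some m then bword F m else [::]).

(* At crossing c with smoothing choice s c (r = 1 for A, 0 for B) the two  *)
(* smoothing arcs are {end r, end r+1} (attaching arc false, flags j=false, *)
(* true at ends r, r+1) and {end r+3, end r+2} (attaching arc true, flags   *)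
(* j=false,true at ends r+3, r+2); the sides of the ribbon then join        *)
(* (c,false,k) and (c,true,k).                                              *)
Definition fptK (K : vkd) (s : kstate K) (x : 'I_(vk_n K) * bool * bool) : CE K :=
  let: (c, i, j) := x in
  let r := nat_of_bool (s c) in
  pt K c (if i then (r + 3 - j)%N else (r + j)%N).

Definition nuK (K : vkd) (s : kstate K) (x : 'I_(vk_n K) * bool * bool)
  : 'I_(vk_n K) * bool * bool :=
  odflt x [pick y | fptK s y == segn (fptK s x)].

Definition markK (K : vkd) (s : kstate K) : option ('I_(vk_n K) * bool * bool) :=
  [pick y | (nat_of_ord (fptK s y).1 == 0%N) && ~~ (fptK s y).2].

(* arrows run counterclockwise around each (planar) edge ribbon *)
Definition GsK (K : vkd) (s : kstate K) : mrgraph :=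
  @MRG (vk_n K) 0 (nuK s) (markK s) (fun c => s c)
    (fun c i => if disor K (s c) c then Some (~~ i) else None)
    (fun c k => if disor K (s c) c then None else Some k).

Arguments arrowBR {R} G a c b Kv Lv Lv'.
Arguments arrow_bracket {R} K A B d Kv Lv Lv'.
Arguments arrow_poly {R} K A Kv Lv Lv'.

(* Fix the state [s].  Every state [s'] is [s] flipped on the set [X] of
   crossings where they differ, and flipping a crossing trades an [A] for a [B]
   or back: this produces the edge weights [b_e].  The flags of [G^s_K] are in
   bijection with the ends of the crossings ([fptK]), and this bijection turns
   the walk along the boundary of the spanning subgraph [X], arrows included,
   into the walk along the components of the state [s'].  So the boundary
   components of [X] are the components of [s'], the marked one being the arc;
   their arrow words agree up to rotation, reversal and negation, which leave
   the index [j] unchanged.  Finally [bc(X)] exceeds the number of loops of [s']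
   by one, which accounts for the factor [1/d]. *)

From HB Require Import structures.
From mathcomp Require Import all_boot all_order all_algebra zify ring.
Set Implicit Arguments. Unset Strict Implicit. Unset Printing Implicit Defensive.
Import Order.TTheory GRing.Theory Num.Theory.
Local Open Scope ring_scope.

Definition arrow_sign (b : bool) : int := if b then 1 else -1.

Fixpoint alt_sum (w : seq bool) : int :=
  if w is b :: w' then arrow_sign b - alt_sum w' else 0.

(* Closed form of [jcyc]: a reduced cyclic word of even length has [2j]
   alternating arrows, where [2j = |alt_sum w|]; odd words reduce to one arrow. *)
Definition arrow_index (w : seq bool) : nat :=
  if odd (size w) then 0 else (absz (alt_sum w) %/ 2)%N.

Definition neqb : rel bool := fun a b => a != b.

Lemma red_cons b w : red (b :: w) =
  if red w is b' :: w' then (if b == b' then w' else b :: red w) else [:: b].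
Proof. by []. Qed.

Lemma alt_sum_red w : alt_sum (red w) = alt_sum w.
Proof.
elim: w => [|b w IHw] //; rewrite red_cons /= -IHw.
case: (red w) => [|b' w'] //=.
by case: eqP => [<-|] //=; rewrite opprB addrC subrK.
Qed.

Lemma sorted_red w : sorted neqb (red w).
Proof.
elim: w => [|b w IHw] //; rewrite red_cons.
case: (red w) IHw => [|b' w'] //= alt_w.
case: eqP => [_|/eqP neq_bb']; first exact: path_sorted alt_w.
by rewrite /= /neqb neq_bb'.
Qed.

Lemma odd_size_red w : odd (size (red w)) = odd (size w).
Proof.
elim: w => [|b w IHw] //; rewrite red_cons /= -IHw.
case: (red w) => [|b' w'] //=.
by case: eqP => //= _; rewrite negbK.
Qed.

Lemma alt_sum_alternating v :
  sorted neqb v -> alt_sum v = arrow_sign (head true v) * (size v)%:Z.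
Proof.
elim: v => [|b v IHv] //= alt_v.
rewrite IHv; last exact: path_sorted alt_v.
case: v alt_v {IHv} => [|b' v] /=; first by rewrite mulr1 subr0.
case/andP=> neq_bb' _; have -> : b' = ~~ b by case: b b' neq_bb' => [] [].
rewrite -[(size v).+2]addn1 PoszD.
by case: b {neq_bb'} => /=; rewrite /arrow_sign ?mulN1r ?mul1r ?opprK; lia.
Qed.

Lemma absz_alt_sum w : absz (alt_sum w) = size (red w).
Proof.
rewrite -alt_sum_red alt_sum_alternating ?sorted_red //.
by case: (head _ _); rewrite /arrow_sign ?mul1r ?mulN1r ?abszN.
Qed.

Lemma last_alternating x v :
  path neqb x v -> last x v = if odd (size v) then ~~ x else x.
Proof.
elim: v x => [|y v IHv] x //= /andP[neq_xy alt_v].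
rewrite IHv //; have -> : y = ~~ x by move: neq_xy; rewrite /neqb; case: x; case: (y).
by case: (odd _); rewrite ?negbK.
Qed.

(* The end arrows of an alternating word agree exactly when its length is odd. *)
Lemma size_cstrip k v : (size v <= k)%N -> sorted neqb v ->
  size (cstrip k v) = if odd (size v) then 1%N else size v.
Proof.
elim: k v => [|k IHk] [|x [|y v]] //=.
move=> size_v /andP[neq_xy alt_v].
have := @last_alternating x (y :: v); rewrite /= neq_xy alt_v => /(_ isT) ->.
rewrite negbK; case odd_v: (odd (size v)) => /=; last by case: x {neq_xy}.
rewrite eqxx IHk ?size_belast ?odd_v //; first lia.
case/lastP: v {odd_v size_v} alt_v => //= v z.
by rewrite belast_rcons rcons_path => /andP[].
Qed.

Lemma jcycE w : jcyc w = arrow_index w.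
Proof.
rewrite /jcyc /cred /arrow_index size_cstrip ?sorted_red // odd_size_red absz_alt_sum.
by case: (odd _).
Qed.

Lemma alt_sum_cat u v : alt_sum (u ++ v) = alt_sum u + (-1) ^+ size u * alt_sum v.
Proof.
elim: u => [|b u IHu] /=; first by rewrite add0r mul1r.
by rewrite IHu exprS; ring.
Qed.

Lemma alt_sum_map_negb w : alt_sum (map negb w) = - alt_sum w.
Proof.
by elim: w => [|b w IHw] //=; rewrite IHw; case: b; rewrite /arrow_sign /=; ring.
Qed.

Lemma alt_sum_rev w : alt_sum (rev w) = - ((-1) ^+ size w * alt_sum w).
Proof.
elim: w => [|b w IHw] /=; first by rewrite mulr0 oppr0.
by rewrite rev_cons -cats1 alt_sum_cat IHw size_rev /= exprS; ring.
Qed.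

Lemma arrow_index_map_negb w : arrow_index (map negb w) = arrow_index w.
Proof. by rewrite /arrow_index size_map alt_sum_map_negb abszN. Qed.

Lemma arrow_index_rev w : arrow_index (rev w) = arrow_index w.
Proof. by rewrite /arrow_index size_rev alt_sum_rev abszN abszM abszX /= exp1n mul1n. Qed.

Lemma arrow_index_catC u v : arrow_index (u ++ v) = arrow_index (v ++ u).
Proof.
rewrite /arrow_index !size_cat addnC; case: ifP => // /negbT.
rewrite oddD !alt_sum_cat -[(-1) ^+ size u]signr_odd -[(-1) ^+ size v]signr_odd.
case: (odd (size u)); case: (odd (size v)) => //= _; last by rewrite !mul1r addrC.
by rewrite !mulN1r -abszN opprD opprK addrC.
Qed.

Lemma arrow_index_flatten_rot (ws : seq (seq bool)) i :
  arrow_index (flatten (rot i ws)) = arrow_index (flatten ws).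
Proof. by rewrite /rot flatten_cat arrow_index_catC -flatten_cat cat_take_drop. Qed.

Lemma connect_homo (T1 T2 : finType) (h : T1 -> T2) (e1 : rel T1) (e2 : rel T2) :
  {homo h : x y / e1 x y >-> e2 x y} ->
  {homo h : x y / connect e1 x y >-> connect e2 x y}.
Proof.
move=> h_e x y /connectP[p e1_p ->] {y}.
elim: p x e1_p => [|z p IHp] x /=; first by rewrite connect0.
by case/andP=> /h_e e2_xz /IHp; apply: connect_trans (connect1 e2_xz).
Qed.

Section Transport.
Variables (T T' : finType) (f : T -> T') (g : T' -> T).
Hypotheses (fK : cancel f g) (gK : cancel g f).

Lemma connect_transport (e : rel T) (e' : rel T') :
  (forall x y, e' (f x) (f y) = e x y) ->
  forall x y, connect e' (f x) (f y) = connect e x y.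
Proof.
move=> ef x y; apply/idP/idP; last by apply: connect_homo => a b; rewrite ef.
by move/(@connect_homo _ _ g e' e); rewrite !fK; apply=> a b; rewrite -ef !gK.
Qed.

Lemma orbit_transport (h : T -> T) (h' : T' -> T') :
  injective h -> (forall x, h' (f x) = f (h x)) ->
  forall x, orbit h' (f x) = map f (orbit h x).
Proof.
move=> inj_h hf x; have inj_f := can_inj fK.
have cycle_f : fcycle h' (map f (orbit h x)).
  rewrite cycle_map (@eq_cycle _ _ (frel h)) ?cycle_orbit // => a b /=.
  by rewrite hf (inj_eq inj_f).
rewrite (orbitE cycle_f) ?map_inj_uniq ?orbit_uniq ?map_f ?in_orbit //.
by rewrite index_map // -/(findex h x x) findex0 rot0.
Qed.

Lemma big_roots_transport (R : Type) (idx : R) (op : Monoid.com_law idx)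
    (e : rel T) (e' : rel T') (G : T' -> R) (P : pred T') :
  (forall x y, connect e' (f x) (f y) = connect e x y) -> connect_sym e ->
  (forall y1 y2, connect e' y1 y2 -> G y1 = G y2) ->
  (forall y1 y2, connect e' y1 y2 -> P y1 = P y2) ->
  \big[op/idx]_(x | (x \in roots e) && P (f x)) G (f x) =
  \big[op/idx]_(y | (y \in roots e') && P y) G y.
Proof.
move=> ee' sym_e G_conn P_conn.
have sym_e' : connect_sym e' by move=> a b; rewrite -(gK a) -(gK b) !ee' sym_e.
rewrite (reindex_onto (fun x => fingraph.root e' (f x))
                      (fun y => fingraph.root e (g y))); last first.
  move=> y /andP[/eqP root_y _]; rewrite -{2}root_y; apply/fingraph.rootP => //.
  by rewrite -{2}(gK y) ee' sym_e connect_root.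
apply: eq_big => [x|x _]; last exact/G_conn/connect_root.
rewrite !unfold_in /= root_root // eqxx /= -(P_conn _ _ (connect_root _ _)) andbC.
congr (_ && (_ == _)); apply/fingraph.rootP => //.
by rewrite -ee' gK connect_root.
Qed.

End Transport.

Section Diagram.
Variables (K : vkd) (K_valid : valid_vkd K).

Lemma vk_pass_inj c b c' b' : vk_pass K c b = vk_pass K c' b' -> c = c' /\ b = b'.
Proof. by move=> /(@K_valid (c, b) (c', b')) [-> ->]. Qed.

Lemma pt_modn c k : pt K c (k %% 4) = pt K c k.
Proof. by rewrite /pt modn_mod. Qed.

Lemma eq_pt_modn c k k' : (k %% 4 = k' %% 4)%N -> pt K c k = pt K c k'.
Proof. by move=> eq_k; rewrite -pt_modn eq_k pt_modn. Qed.

Lemma pt_inj c k c' k' : pt K c k = pt K c' k' -> c = c' /\ (k %% 4 = k' %% 4)%N.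
Proof.
rewrite /pt; have := ltn_pmod k (isT : 0 < 4)%N; have := ltn_pmod k' (isT : 0 < 4)%N.
case: (k %% 4)%N => [|[|[|[|?]]]] //; case: (k' %% 4)%N => [|[|[|[|?]]]] //= _ _;
  move=> /pair_equal_spec[/vk_pass_inj[eq_c eq_b] eq_b2]; subst; move: eq_b2;
  case: (vk_pos K c') => /= eq_b2; split; congruence.
Qed.

Lemma locate_pt c k : locate (pt K c k) = Some (c, inord (k %% 4)).
Proof.
rewrite /locate; case: pickP => [[c' k'] /= /eqP /pt_inj[-> eq_k] | no_pt].
  by congr (Some (_, _)); apply: val_inj; rewrite /= inordK ?ltn_pmod // -eq_k modn_small.
by have := no_pt (c, inord (k %% 4)); rewrite /= inordK ?ltn_pmod // pt_modn eqxx.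
Qed.

(* Every end is an end of some crossing: the [2n] passages are exactly the
   images of the [2n] strands [(c, over/under)]. *)
Lemma pt_surj q : exists c k, q = pt K c k.
Proof.
have card_le : (#|'I_(2 * vk_n K)| <= #|{: 'I_(vk_n K) * bool}|)%N.
  by rewrite card_prod !card_ord card_bool mulnC.
have [strand _ strandK] := inj_card_bij K_valid card_le.
case: q => p b; case E: (strand p) => [c o]; have := strandK p; rewrite E /= => pass_p.
exists c; case: o pass_p {E} => pass_p.
  by case: b; [exists 0%N | exists 2%N]; rewrite /pt /= pass_p.
by case: b; case pos_c: (vk_pos K c); [exists 1%N|exists 3%N|exists 3%N|exists 1%N];
  rewrite /pt /= pass_p pos_c.
Qed.

Lemma smooth_pt (s : kstate K) c k :
  smooth s (pt K c k) = pt K c (partner (s c) (k %% 4)).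
Proof. by rewrite /smooth locate_pt /= inordK ?ltn_pmod. Qed.

Lemma sarrow_pt (s : kstate K) c k : sarrow s (pt K c k) =
  if disor K (s c) c then [:: odd (k %% 4) == s c] else [::].
Proof. by rewrite /sarrow locate_pt /= inordK ?ltn_pmod. Qed.

Lemma segnK : involutive (@segn K).
Proof. by case=> p [] /=; rewrite /segn /= ?ordSK ?ord_predK. Qed.

Lemma smoothK (s : kstate K) : involutive (smooth s).
Proof.
move=> q; have [c [k ->]] := pt_surj q; rewrite !smooth_pt; apply: eq_pt_modn.
have := ltn_pmod k (isT : (0 < 4)%N).
by case: (k %% 4)%N => [|[|[|[|?]]]] //; case: (s c).
Qed.

Lemma sarrow_smooth (s : kstate K) q : sarrow s (smooth s q) = map negb (sarrow s q).
Proof.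
have [c [k ->]] := pt_surj q; rewrite smooth_pt !sarrow_pt.
case: (disor _ _ _) => //=; congr [:: _].
have := ltn_pmod k (isT : (0 < 4)%N).
by case: (k %% 4)%N => [|[|[|[|?]]]] //; case: (s c).
Qed.

Lemma rev_sarrow (s : kstate K) q : rev (sarrow s q) = sarrow s q.
Proof. by rewrite /sarrow; case: (locate q) => [[c k]|] //; case: (disor _ _ _). Qed.

Lemma stepK_inj (s : kstate K) : injective (stepK s).
Proof. by move=> a b /(can_inj segnK)/(can_inj (@smoothK s)). Qed.

Lemma connect_sym_stconn (s : kstate K) : connect_sym (stconn s).
Proof.
apply: sym_connect_sym => x y.
by rewrite /stconn ![y == _]eq_sym !(inv_eq (@smoothK s)) !(inv_eq segnK).
Qed.

Lemma arrow_index_wordK_step (s : kstate K) q :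
  arrow_index (wordK s (stepK s q)) = arrow_index (wordK s q).
Proof.
have cycle_q := cycle_orbit (@stepK_inj s) q.
rewrite /wordK (orbitE cycle_q (orbit_uniq _ _) (mem_orbit (in_orbit _ _))).
by rewrite map_rot arrow_index_flatten_rot.
Qed.

(* Following a state component from [smooth s q] traverses it backwards, which
   reverses and negates its arrow word. *)
Lemma arrow_index_wordK_smooth (s : kstate K) q :
  arrow_index (wordK s (smooth s q)) = arrow_index (wordK s q).
Proof.
set O := orbit (stepK s) q.
have cycle_back : fcycle (stepK s) (map (smooth s) (rev O)).
  rewrite cycle_map rev_cycle (@eq_cycle _ _ (frel (stepK s))) ?cycle_orbit //;
    first exact: stepK_inj.
  by move=> a b /=; rewrite /stepK smoothK; apply/eqP/eqP => <-; rewrite segnK.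
have uniq_back : uniq (map (smooth s) (rev O)).
  by rewrite map_inj_uniq ?rev_uniq ?orbit_uniq //; apply: can_inj (@smoothK s).
have q_back : smooth s q \in map (smooth s) (rev O) by rewrite map_f ?mem_rev ?in_orbit.
rewrite /wordK (orbitE cycle_back uniq_back q_back) map_rot arrow_index_flatten_rot.
rewrite -map_comp (eq_map (@sarrow_smooth s)) map_comp -map_flatten.
rewrite arrow_index_map_negb map_rev.
have -> : flatten (rev (map (sarrow s) O)) = rev (flatten (map (sarrow s) O)).
  by rewrite rev_flatten -map_comp (eq_map (@rev_sarrow s)).
by rewrite arrow_index_rev.
Qed.

Lemma arrow_index_wordK_connect (s : kstate K) q1 q2 : connect (stconn s) q1 q2 ->
  arrow_index (wordK s q1) = arrow_index (wordK s q2).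
Proof.
case/connectP=> p + -> {q2}; elim: p q1 => [|z p IHp] q1 //= /andP[q1z /IHp <-].
case/orP: q1z => /eqP ->; first by rewrite arrow_index_wordK_smooth.
have -> : segn q1 = stepK s (smooth s q1) by rewrite /stepK smoothK.
by rewrite arrow_index_wordK_step arrow_index_wordK_smooth.
Qed.

Lemma fptK_inj (s : kstate K) : injective (@fptK K s).
Proof.
move=> [[c i] j] [[c' i'] j'] /pt_inj[eq_c]; subst c'.
by case: (s c) i j i' j' => [] [] [] [] [].
Qed.

Lemma fptK_bij (s : kstate K) : bijective (@fptK K s).
Proof.
apply: inj_card_bij; first exact: fptK_inj.
by rewrite !card_prod !card_ord !card_bool; lia.
Qed.

End Diagram.

Lemma card_roots_connect (T : finType) (e : rel T) (t : T) : connect_sym e ->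
  #|[pred x | x \in roots e]| = #|[pred x | (x \in roots e) && ~~ connect e t x]|.+1.
Proof.
move=> sym_e; rewrite (cardD1 (fingraph.root e t)) !inE roots_root // add1n.
congr _.+1; apply: eq_card => x; rewrite !inE -[roots e x]/(fingraph.root e x == x).
case: (fingraph.root e x =P x) => [root_x|]; rewrite ?andbF //= andbT.
by rewrite -root_connect // root_x eq_sym.
Qed.

Lemma prodr_if_card (R : comNzRingType) (I : finType) (p : pred I) (a b : R) :
  \prod_i (if p i then a else b) = a ^+ #|[set i | p i]| * b ^+ #|[set i | ~~ p i]|.
Proof.
rewrite (bigID p) /= -!prodr_const.
by congr (_ * _); apply: eq_big => i; rewrite ?inE //; case: (p i).
Qed.

Lemma state_weight_flip (R : fieldType) (I : finType) (s s' : pred I) (X : {set I})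
    (a b : R) :
  (forall i, (i \in X) = (s' i != s i)) -> a != 0 -> b != 0 ->
  a ^+ #|[set i | s' i]| * b ^+ #|[set i | ~~ s' i]| =
  a ^+ #|[set i | s i]| * b ^+ #|[set i | ~~ s i]| *
  \prod_(i in X) (if s i then b / a else a / b).
Proof.
move=> X_flip a_neq0 b_neq0; rewrite -!prodr_if_card (big_mkcond (mem X)) -big_split.
apply: eq_bigr => i _ /=; rewrite X_flip.
by case: (s i); case: (s' i); rewrite /= ?mulr1 // mulrC divfK.
Qed.

Definition on_loop (K : vkd) (s : kstate K) (q : CE K) : bool :=
  if tailpt K is Some t then ~~ connect (stconn s) t q else true.

Section RibbonGraph.
Variables (K : vkd) (K_valid : valid_vkd K) (s : kstate K).

Lemma fptK_nuK x : fptK s (nuK s x) = segn (fptK s x).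
Proof.
rewrite /nuK; case: pickP => [y /eqP -> // | no_y].
have [fi _ fiK] := fptK_bij K_valid s.
by have := no_y (fi (segn (fptK s x))); rewrite fiK eqxx.
Qed.

Lemma tailpt_markK : tailpt K = omap (fptK s) (markK s).
Proof.
have [fi _ fiK] := fptK_bij K_valid s.
rewrite /tailpt /markK.
case: pickP => [t tail_t|no_t]; case: pickP => [m mark_m|no_m] //=.
- congr Some; case: (fptK s m) mark_m => p b; case: t tail_t => p' b' /=.
  case/andP=> /eqP p'0 /negPf-> /andP[/eqP p0 /negPf->].
  by congr (_, _); apply: val_inj; rewrite /= p0 p'0.
- by have := no_m (fi t); rewrite fiK tail_t.
- by have := no_t (fptK s m); rewrite mark_m.
Qed.

Variables (s' : kstate K) (X : {set 'I_(vk_n K)}).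
Hypothesis X_flip : forall c, (c \in X) = (s' c != s c).

Lemma fptK_tauF x : fptK s (@tauF (GsK s) X x) = smooth s' (fptK s x).
Proof.
case: x => [[c i] j]; rewrite /tauF X_flip /fptK /=.
by case Es: (s c); case Es': (s' c); case: i; case: j;
  rewrite /= (smooth_pt K_valid) ?Es ?Es'; apply: eq_pt_modn.
Qed.

Lemma arrF_fptK x : @arrF (GsK s) X x = sarrow s' (fptK s x).
Proof.
case: x => [[c i] j]; rewrite /arrF X_flip /fptK /= (sarrow_pt K_valid) /disor.
by case Es: (s c); case Es': (s' c); case Hp: (vk_pos K c); case: i; case: j;
  rewrite /= ?Es ?Es' ?Hp.
Qed.

Lemma stconn_fptK x y : stconn s' (fptK s x) (fptK s y) = @bconn (GsK s) X x y.
Proof.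
by rewrite /stconn /bconn -fptK_tauF -fptK_nuK !(inj_eq (@fptK_inj _ K_valid s)) orbC.
Qed.

Lemma stepK_fptK x : stepK s' (fptK s x) = fptK s (@bstep (GsK s) X x).
Proof. by rewrite /stepK /bstep -fptK_tauF fptK_nuK. Qed.

Lemma bword_fptK x : @bword (GsK s) X x = wordK s' (fptK s x).
Proof.
have [fi fK fiK] := fptK_bij K_valid s.
have bstep_inj : injective (@bstep (GsK s) X).
  move=> a b eq_ab; apply: (@fptK_inj _ K_valid s); apply: (@stepK_inj _ K_valid s').
  by rewrite !stepK_fptK eq_ab.
rewrite /bword /wordK (orbit_transport fK bstep_inj stepK_fptK) -map_comp.
by congr flatten; apply: eq_map => y; rewrite /= arrF_fptK.
Qed.

Lemma connect_bconn_fptK x y :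
  connect (stconn s') (fptK s x) (fptK s y) = connect (@bconn (GsK s) X) x y.
Proof.
by have [fi fK fiK] := fptK_bij K_valid s; rewrite (connect_transport fK fiK stconn_fptK).
Qed.

Lemma connect_sym_bconn : connect_sym (@bconn (GsK s) X).
Proof. by move=> x y; rewrite -!connect_bconn_fptK (connect_sym_stconn K_valid). Qed.

Lemma on_loop_connect q1 q2 :
  connect (stconn s') q1 q2 -> on_loop s' q1 = on_loop s' q2.
Proof.
rewrite /on_loop => q1q2; case: (tailpt K) => [t|] //; congr negb.
apply/idP/idP => [tq1|tq2]; first exact: connect_trans tq1 q1q2.
by apply: connect_trans tq2 _; rewrite (connect_sym_stconn K_valid).
Qed.

Lemma on_loop_fptK x :
  (if rg_mark (GsK s) is Some m then ~~ connect (@bconn (GsK s) X) m x else true) =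
  on_loop s' (fptK s x).
Proof.
rewrite /on_loop tailpt_markK /=.
by case: (markK s) => [m|] //=; rewrite connect_bconn_fptK.
Qed.

(* The boundary component through the marking corresponds to the arc of the
   state; it is the one component not counted among the loops. *)
Lemma bcF_loops :
  @bcF (GsK s) X = #|[pred q | (q \in roots (stconn s')) && on_loop s' q]|.+1.
Proof.
have [fi _ fiK] := fptK_bij K_valid s.
have card_roots : #|[pred x | x \in roots (@bconn (GsK s) X)]| =
                  #|[pred q | q \in roots (stconn s')]|.
  rewrite -!sum1_card
    (eq_bigl (fun x => (x \in roots (@bconn (GsK s) X)) && predT (fptK s x))); last first.
    by move=> x; rewrite inE andbT.
  rewrite (big_roots_transport fiK _ (G := fun=> 1%N) (P := predT)
             connect_bconn_fptK connect_sym_bconn) //.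
  by apply: eq_bigl => q; rewrite inE andbT.
rewrite /bcF /extra card_roots /on_loop tailpt_markK /=.
case: (markK s) => [m|] /=.
  by rewrite (card_roots_connect (fptK s m) (connect_sym_stconn K_valid s')) !addn0.
by rewrite add0n addn1; congr _.+1; apply: eq_card => q; rewrite !inE andbT.
Qed.

Lemma prod_boundary_loops (R : comNzRingType) (Kv : nat -> R) :
  \prod_(x | (x \in roots (@bconn (GsK s) X)) &&
       (if rg_mark (GsK s) is Some m then ~~ connect (@bconn (GsK s) X) m x else true))
     Kv (jcyc (@bword (GsK s) X x)) =
  \prod_(q | (q \in roots (stconn s')) && on_loop s' q) Kv (jcyc (wordK s' q)).
Proof.
have [fi _ fiK] := fptK_bij K_valid s.
rewrite -(big_roots_transport fiK _ connect_bconn_fptK connect_sym_bconn).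
- by apply: eq_big => [x|x _]; rewrite ?on_loop_fptK ?bword_fptK.
- by move=> q1 q2 /(arrow_index_wordK_connect K_valid); rewrite !jcycE => ->.
- exact: on_loop_connect.
Qed.

Lemma bword_mark :
  (if rg_mark (GsK s) is Some m then @bword (GsK s) X m else [::]) =
  (if tailpt K is Some t then wordK s' t else [::]).
Proof. by rewrite tailpt_markK /=; case: (markK s) => [m|] //=; rewrite bword_fptK. Qed.

End RibbonGraph.

Lemma flip_state_bij (K : vkd) (s : kstate K) :
  bijective (fun X : {set 'I_(vk_n K)} => [ffun c => (c \in X) (+) s c] : kstate K).
Proof.
exists (fun s' : kstate K => [set c | s' c != s c]) => [X|s'].
  by apply/setP => c; rewrite inE ffunE; case: (c \in X); case: (s c).
by apply/ffunP => c; rewrite ffunE inE; case: (s' c); case: (s c).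
Qed.

Lemma loopsKE (R : comNzRingType) (K : vkd) (s : kstate K) (d : R) (Kv : nat -> R) :
  loopsK s d Kv =
  \prod_(q | (q \in roots (stconn s)) && on_loop s q) (d * Kv (jcyc (wordK s q))).
Proof. by []. Qed.

Lemma arrow_bracket_arrowBR (R : fieldType) (K : vkd) (s : kstate K) (A B d : R)
    (Kv Lv Lv' : nat -> R) :
  valid_vkd K -> A != 0 -> B != 0 -> d != 0 ->
  arrow_bracket K A B d Kv Lv Lv' =
    A ^+ #|[set c | s c]| * B ^+ #|[set c | ~~ s c]| / d *
    arrowBR (GsK s) 1 d (fun c => if s c then B / A else A / B) Kv Lv Lv'.
Proof.
move=> K_valid A_neq0 B_neq0 d_neq0.
rewrite /arrow_bracket /arrowBR mulr_sumr (reindex _ (onW_bij _ (flip_state_bij s))).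
apply: eq_bigr => X _; set s' := [ffun c => _].
have X_flip c : (c \in X) = (s' c != s c) by rewrite ffunE; case: (c \in X); case: (s c).
rewrite (state_weight_flip X_flip A_neq0 B_neq0) expr1n mul1r expr0 mulr1.
rewrite (prod_boundary_loops K_valid X_flip) (bcF_loops K_valid X_flip).
have loops_d : \prod_(q | (q \in roots (stconn s')) && on_loop s' q) d =
                d ^+ #|[pred q | (q \in roots (stconn s')) && on_loop s' q]|.
  by rewrite -prodr_const.
rewrite (bword_mark K_valid X_flip) loopsKE /arcK big_split /= loops_d exprS.
by field.
Qed.

Theorem mainTheorem11 (F : fieldType) (K : vkd) (s : kstate K) (A B d : F)
    (Kv Lv Lv' : nat -> F) :
  valid_vkd K -> Kv 0%N = 1 -> Lv 0%N = 1 -> Lv' 0%N = 1 ->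
  A != 0 -> B != 0 -> d != 0 ->
  let G := GsK s in
  let ep := #|[set e | rg_sign G e]| in
  let em := #|[set e | ~~ rg_sign G e]| in
  arrow_bracket K A B d Kv Lv Lv' =
    A ^+ ep * B ^+ em / d *
    arrowBR G 1 d (fun e => if rg_sign G e then B / A else A / B) Kv Lv Lv'
  /\
  (- A ^+ 2 - A ^- 2 != 0 ->
   arrow_poly K A Kv Lv Lv' =
    A ^ (ep%:Z - em%:Z) / (- A ^+ 2 - A ^- 2) *
    arrowBR G 1 (- A ^+ 2 - A ^- 2)
      (fun e => if rg_sign G e then A^-1 / A else A / A^-1) Kv Lv Lv').
Proof.
move=> K_valid _ _ _ A_neq0 B_neq0 d_neq0 G ep em.
split=> [|delta_neq0]; first exact: arrow_bracket_arrowBR.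
rewrite /arrow_poly.
rewrite (arrow_bracket_arrowBR s _ _ _ K_valid A_neq0 (invr_neq0 A_neq0) delta_neq0).
by rewrite expfzDr // -exprnN exprVn.
Qed.
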